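(* Let $L,B>0$ satisfy $$2A^2:=\pi^2\Big[\frac{3}{L^2}+\frac{1}{4B^2}\Big]-1>0,$$ and let $u_0$ satisfy $$\|u_0\|^2<\frac{A^2}{2\pi^2\big(\frac{1}{L^2}+\frac{1}{4B^2}\big)}.$$ Suppose $u\in L^\infty(0,\infty;H^1_0(\Omega))$ is a solution of $$u_t+u_x+u^2u_x+u_{xxx}+u_{xyy}=0\text{ in }\Omega\times(0,\infty),\quad u(x,\pm B,t)=0,\quad u(0,y,t)=u(L,y,t)=u_x(L,y,t)=0,\quad u(\cdot,0)=u_0,$$ regular enough that multiplying the equation by $u$ and by $(1+x)u$ and integrating by parts over $\Omega$ is justified. Then for all $t\ge0$, $$\|u\|^2(t)\le\big(1+x,u^2\big)(t)\le e^{-\frac{A^2}{1+L}t}\big(1+x,u_0^2\big).$$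
   Context: $\Omega=(0,L)\times(-B,B)$, $\|\cdot\|$ is the $L^2(\Omega)$ norm, and $\big(1+x,w^2\big)(t):=\int_\Omega(1+x)\,w^2(x,y,t)\,dx\,dy$. *)

From Stdlib Require Import Reals Lra ClassicalEpsilon.
Open Scope R_scope.

(* Riemann integral of f over [a,b] as a total function: the value of the
   Riemann integral if f is Riemann integrable on [a,b] (well defined since
   RiemannInt does not depend on the integrability proof), otherwise an
   unspecified real. *)
Definition Integ (f : R -> R) (a b : R) : R :=
  epsilon (inhabits 0%R)
    (fun I => exists pr : Riemann_integrable f a b, RiemannInt pr = I).

Definition IntOmega (L B : R) (F : R -> R -> R) : R :=
  Integ (fun x => Integ (fun y => F x y) (- B) B) 0 L.

Definition norm2 (L B : R) (w : R -> R -> R) : R :=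
  IntOmega L B (fun x y => (w x y) ^ 2).

Definition wnorm2 (L B : R) (w : R -> R -> R) : R :=
  IntOmega L B (fun x y => (1 + x) * (w x y) ^ 2).

Definition cont3 (f : R -> R -> R -> R) : Prop :=
  forall x y t eps, 0 < eps -> exists delta, 0 < delta /\
    forall x' y' t', Rabs (x' - x) < delta -> Rabs (y' - y) < delta ->
      Rabs (t' - t) < delta -> Rabs (f x' y' t' - f x y t) < eps.

Definition dx_is (f g : R -> R -> R -> R) : Prop :=
  forall x y t, derivable_pt_lim (fun s => f s y t) x (g x y t).
Definition dy_is (f g : R -> R -> R -> R) : Prop :=
  forall x y t, derivable_pt_lim (fun s => f x s t) y (g x y t).
Definition dt_is (f g : R -> R -> R -> R) : Prop :=
  forall x y t, derivable_pt_lim (fun s => f x y s) t (g x y t).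

(* For a weight al + be x (al >= 0), multiplying the equation by
   (al + be x) u and integrating by parts over Omega gives the energy inequality
     d/dt int (al + be x) u^2 <= be int (u^2 + u^4/2 - 3 u_x^2 - u_y^2),
   the boundary terms being either zero or of the good sign.  With be = 0 the
   L2 norm N(t) is nonincreasing, so the smallness of ||u0||^2 persists.  With
   be = 1, the Poincare inequalities (pi/L)^2 N <= ||u_x||^2 and
   (pi/(2B))^2 N <= ||u_y||^2 (from the sharp one-dimensional Wirtinger
   inequality) and the Ladyzhenskaya-type bound
   ||u||_4^4 <= N (||u_x||^2 + ||u_y||^2) / 2 turn the right-hand side into
   -A^2 N <= -A^2/(1+L) W for W = int (1 + x) u^2, and Gronwall concludes. *)

From Stdlib Require Import Reals Lra Psatz ClassicalEpsilon.
From Coquelicot Require Import Coquelicot.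
Open Scope R_scope.

Lemma Integ_RInt (f : R -> R) (a b : R) : ex_RInt f a b -> Integ f a b = RInt f a b.
Proof.
  intros Hf. unfold Integ.
  assert (Hex : exists I, exists pr : Riemann_integrable f a b, RiemannInt pr = I).
  { exists (RInt f a b), (ex_RInt_Reals_0 _ _ _ Hf). symmetry; apply RInt_Reals. }
  destruct (epsilon_spec (inhabits 0) _ Hex) as [pr <-].
  symmetry; apply RInt_Reals.
Qed.

(* Derivation rules for real functions, stated with real-valued derivatives so
   that they chain without coercions; [derive_tac] combines them, delegating
   the leaves (the unknown partial derivatives) to a user tactic, which must be
   passed as [ltac:(idtac; ...)] so that it runs at each leaf. *)
Lemma deriv_plus (f g : R -> R) (x df dg : R) :
  is_derive f x df -> is_derive g x dg -> is_derive (fun s => f s + g s) x (df + dg).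
Proof. intros; apply (is_derive_plus f g); auto. Qed.

Lemma deriv_minus (f g : R -> R) (x df dg : R) :
  is_derive f x df -> is_derive g x dg -> is_derive (fun s => f s - g s) x (df - dg).
Proof. intros; apply (is_derive_minus f g); auto. Qed.

Lemma deriv_mult (f g : R -> R) (x df dg : R) :
  is_derive f x df -> is_derive g x dg ->
  is_derive (fun s => f s * g s) x (df * g x + f x * dg).
Proof. intros; apply (is_derive_mult f g); auto. intros; apply Rmult_comm. Qed.

Lemma deriv_const (c x : R) : is_derive (fun _ : R => c) x 0.
Proof. exact (@is_derive_const R_AbsRing R_NormedModule c x). Qed.

Lemma deriv_id (x : R) : is_derive (fun s : R => s) x 1.
Proof. exact (@is_derive_id R_AbsRing x). Qed.

Lemma deriv_scal (c x : R) : is_derive (Rmult c) x c.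
Proof.
  replace c with (0 * x + c * 1) at 2 by ring.
  apply (deriv_mult (fun _ => c) (fun s => s)); [apply deriv_const | apply deriv_id].
Qed.

Lemma is_derive_eq (f : R -> R) (x l l' : R) : is_derive f x l -> l = l' -> is_derive f x l'.
Proof. intros H <-; exact H. Qed.

Ltac derive_tac leaf := lazymatch goal with
| |- is_derive (fun s => _ - _) _ _ => apply deriv_minus; [derive_tac leaf | derive_tac leaf]
| |- is_derive (fun s => _ + _) _ _ => apply deriv_plus; [derive_tac leaf | derive_tac leaf]
| |- is_derive (fun s => _ * _) _ _ => apply deriv_mult; [derive_tac leaf | derive_tac leaf]
| |- is_derive (Rmult _) _ _ => apply deriv_scal
| |- is_derive (fun s => s) _ _ => apply deriv_id
| |- is_derive (fun s => ?F s ?a ?b) _ _ => leaf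
| |- is_derive (fun s => ?F ?a s ?b) _ _ => leaf
| |- is_derive (fun s => ?F ?a ?b s) _ _ => leaf
| |- is_derive (fun s => _) _ _ => apply deriv_const
| _ => leaf
end.

Lemma cont3_comp (h f1 f2 f3 : R -> R -> R -> R) :
  cont3 h -> cont3 f1 -> cont3 f2 -> cont3 f3 ->
  cont3 (fun x y t => h (f1 x y t) (f2 x y t) (f3 x y t)).
Proof.
  intros Hh H1 H2 H3 x y t eps Heps.
  destruct (Hh (f1 x y t) (f2 x y t) (f3 x y t) eps Heps) as [d [Hd Hd']].
  destruct (H1 x y t d Hd) as [d1 [Hd1 Hd1']].
  destruct (H2 x y t d Hd) as [d2 [Hd2 Hd2']].
  destruct (H3 x y t d Hd) as [d3 [Hd3 Hd3']].
  exists (Rmin d1 (Rmin d2 d3)). split.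
  { repeat apply Rmin_pos; auto. }
  intros x' y' t' Hx Hy Ht.
  pose proof (Rmin_l d1 (Rmin d2 d3)). pose proof (Rmin_r d1 (Rmin d2 d3)).
  pose proof (Rmin_l d2 d3). pose proof (Rmin_r d2 d3).
  apply Hd'; [apply Hd1' | apply Hd2' | apply Hd3']; lra.
Qed.

Lemma cont3_p1 : cont3 (fun x _ _ => x).
Proof. intros x y t eps He; exists eps; split; auto. Qed.

Lemma cont3_p2 : cont3 (fun _ y _ => y).
Proof. intros x y t eps He; exists eps; split; auto. Qed.

Lemma cont3_p3 : cont3 (fun _ _ t => t).
Proof. intros x y t eps He; exists eps; split; auto. Qed.

Lemma cont3_const (c : R) : cont3 (fun _ _ _ => c).
Proof.
  intros x y t eps He; exists 1; split; [lra |].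
  intros. rewrite Rminus_eq_0, Rabs_R0; auto.
Qed.

Lemma cont3_binop (op : R -> R -> R) (f g : R -> R -> R -> R) :
  (forall a b, continuity_2d_pt op a b) -> cont3 f -> cont3 g ->
  cont3 (fun x y t => op (f x y t) (g x y t)).
Proof.
  intros Hop Hf Hg.
  apply (cont3_comp (fun a b _ => op a b) f g (fun _ _ _ => 0)); auto using cont3_const.
  intros a b c eps He. destruct (Hop a b (mkposreal eps He)) as [d Hd].
  exists d; split; [apply cond_pos |]. intros; apply Hd; auto.
Qed.

Lemma cont3_plus (f g : R -> R -> R -> R) :
  cont3 f -> cont3 g -> cont3 (fun x y t => f x y t + g x y t).
Proof.
  apply cont3_binop. intros; apply continuity_2d_pt_plus;
    [apply continuity_2d_pt_id1 | apply continuity_2d_pt_id2].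
Qed.

Lemma cont3_minus (f g : R -> R -> R -> R) :
  cont3 f -> cont3 g -> cont3 (fun x y t => f x y t - g x y t).
Proof.
  apply cont3_binop. intros; apply continuity_2d_pt_minus;
    [apply continuity_2d_pt_id1 | apply continuity_2d_pt_id2].
Qed.

Lemma cont3_mult (f g : R -> R -> R -> R) :
  cont3 f -> cont3 g -> cont3 (fun x y t => f x y t * g x y t).
Proof.
  apply cont3_binop. intros; apply continuity_2d_pt_mult;
    [apply continuity_2d_pt_id1 | apply continuity_2d_pt_id2].
Qed.

Lemma cont3_abs (f : R -> R -> R -> R) : cont3 f -> cont3 (fun x y t => Rabs (f x y t)).
Proof.
  intros Hf.
  apply (cont3_comp (fun a _ _ => Rabs a) f (fun _ _ _ => 0) (fun _ _ _ => 0));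
    auto using cont3_const.
  intros x y t eps He. exists eps; split; auto. intros.
  eapply Rle_lt_trans; [apply Rabs_triang_inv2 | auto].
Qed.

(* A function of the plane is continuous when, seen as a time-independent
   field, it is [cont3]; this lets one tactic handle both situations. *)
Definition cont2 (F : R -> R -> R) : Prop := cont3 (fun x y _ => F x y).

Lemma cont3_freeze (h : R -> R -> R -> R) (t : R) : cont3 h -> cont2 (fun x y => h x y t).
Proof.
  intros H. apply (cont3_comp h (fun x _ _ => x) (fun _ y _ => y) (fun _ _ _ => t));
    auto using cont3_p1, cont3_p2, cont3_const.
Qed.

Ltac cont_tac := lazymatch goal with
| |- cont2 _ => unfold cont2; cont_tac
| |- cont3 (fun x y t => _ + _) => apply cont3_plus; [cont_tac | cont_tac]
| |- cont3 (fun x y t => _ - _) => apply cont3_minus; [cont_tac | cont_tac]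
| |- cont3 (fun x y t => _ * _) => apply cont3_mult; [cont_tac | cont_tac]
| |- cont3 (fun x y t => _ / _) => unfold Rdiv; cont_tac
| |- cont3 (fun x y t => Rabs _) => apply cont3_abs; cont_tac
| |- cont3 (fun x y t => x) => apply cont3_p1
| |- cont3 (fun x y t => y) => apply cont3_p2
| |- cont3 (fun x y t => t) => apply cont3_p3
| |- cont3 _ => first [ apply cont3_const | assumption
                      | match goal with H : cont2 _ |- _ => exact H end
                      | apply cont3_freeze; assumption ]
end.

Lemma cont3_continuous_3 (K : R -> R -> R -> R) (p q z : R) :
  cont3 K -> continuous (fun y => K p q y) z.
Proof.
  intros H. apply filterlim_locally. intros eps.
  destruct (H p q z eps (cond_pos eps)) as [d [Hd Hd']].
  exists (mkposreal d Hd). intros y Hy. apply Hd'; simpl; auto;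
    rewrite Rminus_eq_0, Rabs_R0; auto.
Qed.

Lemma cont2_2d (F : R -> R -> R) (x y : R) : cont2 F -> continuity_2d_pt F x y.
Proof.
  intros H eps. destruct (H x y 0 eps (cond_pos eps)) as [d [Hd Hd']].
  exists (mkposreal d Hd). intros u v Hu Hv. apply (Hd' u v 0); auto.
  rewrite Rminus_eq_0, Rabs_R0; auto.
Qed.

Lemma cont2d_continuous_1 (F : R -> R -> R) (x y : R) :
  continuity_2d_pt F x y -> continuous (fun u => F u y) x.
Proof.
  intros H. apply filterlim_locally. intros eps. destruct (H eps) as [d Hd].
  exists d. intros u Hu. apply Hd; auto. rewrite Rminus_eq_0, Rabs_R0; apply cond_pos.
Qed.

Lemma cont2d_continuous_2 (F : R -> R -> R) (x y : R) :
  continuity_2d_pt F x y -> continuous (fun v => F x v) y.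
Proof.
  intros H. apply filterlim_locally. intros eps. destruct (H eps) as [d Hd].
  exists d. intros u Hu. apply Hd; auto. rewrite Rminus_eq_0, Rabs_R0; apply cond_pos.
Qed.

Lemma cont2_continuous_1 (F : R -> R -> R) (x y : R) : cont2 F -> continuous (fun u => F u y) x.
Proof. intros; apply cont2d_continuous_1, cont2_2d; auto. Qed.

Lemma cont2_continuous_2 (F : R -> R -> R) (x y : R) : cont2 F -> continuous (fun v => F x v) y.
Proof. intros; apply cont2d_continuous_2, cont2_2d; auto. Qed.

Lemma ex_RInt_cont (f : R -> R) (a b : R) : (forall x, continuous f x) -> ex_RInt f a b.
Proof. intros H. apply (@ex_RInt_continuous R_CompleteNormedModule). intros; apply H. Qed.

(* Integrals depending continuously on parameters: if [K] is jointly
   continuous, so is [(p,q) |-> int_a^b K p q y dy] (uniform continuity on the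
   compact [a,b], via Coquelicot's [compactness_value_1d]). *)
Lemma param_integral_cont_le (K : R -> R -> R -> R) (a b p q : R) :
  a <= b -> cont3 K -> continuity_2d_pt (fun p q => RInt (K p q) a b) p q.
Proof.
  intros Hab HK eps.
  set (e' := eps / (4 * (b - a + 1))).
  assert (He' : 0 < e'). { unfold e'. apply Rdiv_lt_0_compat; [apply cond_pos | lra]. }
  assert (Hz : forall z, {d : posreal | forall p' q' y', Rabs (p' - p) < d ->
     Rabs (q' - q) < d -> Rabs (y' - z) < d -> Rabs (K p' q' y' - K p q z) < e'}).
  { intro z. apply constructive_indefinite_description.
    destruct (HK p q z e' He') as [d [Hd H]]. exists (mkposreal d Hd). exact H. }
  set (delta := fun z => mkposreal (proj1_sig (Hz z) / 2) (is_pos_div_2 (proj1_sig (Hz z)))).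
  destruct (compactness_value_1d a b delta) as [d Hd].
  exists d. intros p' q' Hp Hq.
  assert (Hpt : forall y, a <= y <= b -> Rabs (K p' q' y - K p q y) <= 2 * e').
  { intros y Hy. apply Rnot_lt_le. intro Hc. apply (Hd y Hy). intros [z [Hz1 [Hz2 Hz3]]].
    unfold delta in Hz2, Hz3; simpl in Hz2, Hz3.
    destruct (Hz z) as [dz Hdz]; simpl in Hz2, Hz3.
    pose proof (cond_pos dz).
    assert (h1 := Hdz p' q' y ltac:(lra) ltac:(lra) ltac:(lra)).
    assert (h2 := Hdz p q y ltac:(rewrite Rminus_eq_0, Rabs_R0; lra)
                   ltac:(rewrite Rminus_eq_0, Rabs_R0; lra) ltac:(lra)).
    revert Hc h1 h2. unfold Rabs. repeat destruct (Rcase_abs _); lra. }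
  assert (Hex : forall p q, ex_RInt (K p q) a b).
  { intros; apply ex_RInt_cont. intros; apply cont3_continuous_3; auto. }
  change (Rabs (RInt (K p' q') a b - RInt (K p q) a b) < eps).
  rewrite <- (RInt_minus (V := R_CompleteNormedModule)) by apply Hex.
  eapply Rle_lt_trans.
  { apply abs_RInt_le_const; [exact Hab | | exact Hpt].
    apply (ex_RInt_minus (V := R_NormedModule)); apply Hex. }
  unfold e'. pose proof (cond_pos eps).
  apply Rmult_lt_reg_r with (4 * (b - a + 1)); [lra |].
  field_simplify; [nra | lra].
Qed.

Lemma param_integral_cont (K : R -> R -> R -> R) (a b p q : R) :
  cont3 K -> continuity_2d_pt (fun p q => RInt (K p q) a b) p q.
Proof.
  intros HK. destruct (Rle_or_lt a b) as [H | H].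
  - apply param_integral_cont_le; auto.
  - apply continuity_2d_pt_ext with (f := fun p q => - RInt (K p q) b a).
    + intros. symmetry. rewrite <- (opp_RInt_swap (V := R_CompleteNormedModule)); [reflexivity |].
      apply ex_RInt_cont. intros; apply cont3_continuous_3; auto.
    + apply continuity_2d_pt_opp. apply param_integral_cont_le; auto; lra.
Qed.

Section PlaneIntegrals.
Variable F : R -> R -> R.
Hypothesis HF : cont2 F.

Lemma cont2_ex_RInt_2 (x a b : R) : ex_RInt (fun y => F x y) a b.
Proof. apply ex_RInt_cont. intros; apply cont2_continuous_2; auto. Qed.

Lemma cont2_ex_RInt_1 (y a b : R) : ex_RInt (fun x => F x y) a b.
Proof. apply ex_RInt_cont. intros; apply cont2_continuous_1; auto. Qed.

Lemma cont2_inner_cont_2 (c d x : R) : continuous (fun x => RInt (fun y => F x y) c d) x.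
Proof.
  apply (cont2d_continuous_1 (fun p q => RInt (fun y => F p y) c d) x 0).
  apply (param_integral_cont (fun p q y => F p y)).
  apply (cont3_comp (fun x y _ => F x y) (fun x _ _ => x) (fun _ _ t => t) (fun _ _ _ => 0));
    cont_tac.
Qed.

Lemma cont2_inner_cont_1 (a b y : R) : continuous (fun y => RInt (fun x => F x y) a b) y.
Proof.
  apply (cont2d_continuous_1 (fun p q => RInt (fun x => F x p) a b) y 0).
  apply (param_integral_cont (fun p q x => F x p)).
  apply (cont3_comp (fun x y _ => F x y) (fun _ _ t => t) (fun x _ _ => x) (fun _ _ _ => 0));
    cont_tac.
Qed.

Lemma cont2_ex_iterated (a b c d : R) : ex_RInt (fun x => RInt (fun y => F x y) c d) a b.
Proof. apply ex_RInt_cont. intros; apply cont2_inner_cont_2. Qed.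

(* Fubini for continuous functions on a rectangle: both iterated integrals,
   seen as functions of the upper limit [s] in [x], have the same derivative
   and vanish at [s = a]. *)
Lemma fubini (a b c d : R) : a < b ->
  RInt (fun x => RInt (fun y => F x y) c d) a b =
  RInt (fun y => RInt (fun x => F x y) a b) c d.
Proof.
  intros Hab.
  set (phi := fun x => RInt (fun y => F x y) c d).
  set (G := fun s y => RInt (fun x => F x y) a s).
  set (F1 := fun s => RInt phi a s).
  set (F2 := fun s => RInt (fun y => G s y) c d).
  assert (HG : forall s y, is_derive (fun z => G z y) s (F s y)).
  { intros s y. apply (is_derive_RInt (V := R_NormedModule) (fun x => F x y) _ a).
    - exists (mkposreal 1 Rlt_0_1). intros s' _.
      apply (RInt_correct (V := R_CompleteNormedModule)), cont2_ex_RInt_1.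
    - apply cont2_continuous_1; auto. }
  assert (D1 : forall s, is_derive F1 s (phi s)).
  { intros s. apply (is_derive_RInt (V := R_NormedModule) phi _ a).
    - exists (mkposreal 1 Rlt_0_1). intros s' _.
      apply (RInt_correct (V := R_CompleteNormedModule)), cont2_ex_iterated.
    - apply cont2_inner_cont_2. }
  assert (D2 : forall s, is_derive F2 s (phi s)).
  { intros s. eapply is_derive_eq.
    - apply (is_derive_RInt_param G c d s).
      + exists (mkposreal 1 Rlt_0_1). intros s' _ t _. eexists. apply HG.
      + intros t _. apply continuity_2d_pt_ext with (f := F).
        * intros u v. symmetry. apply is_derive_unique, HG.
        * apply cont2_2d; auto.
      + exists (mkposreal 1 Rlt_0_1). intros s' _.
        apply ex_RInt_cont. intros; apply cont2_inner_cont_1.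
    - apply RInt_ext. intros y _. apply is_derive_unique, HG. }
  assert (Heq : F1 a - F2 a = F1 b - F2 b).
  { apply (eq_is_derive (V := R_NormedModule) (fun s => F1 s - F2 s)); auto.
    intros t _. eapply is_derive_eq; [apply deriv_minus; [apply D1 | apply D2] |].
    apply Rminus_diag_eq; reflexivity. }
  assert (Ha1 : F1 a = 0) by apply (RInt_point (V := R_CompleteNormedModule)).
  assert (Ha2 : F2 a = 0).
  { unfold F2, G. rewrite (RInt_ext _ (fun _ => 0)).
    - rewrite (RInt_const (V := R_CompleteNormedModule)). apply Rmult_0_r.
    - intros. apply (RInt_point (V := R_CompleteNormedModule)). }
  unfold F1, F2, G, phi in *. lra.
Qed.

End PlaneIntegrals.

Lemma RInt_scal_R (f : R -> R) (a b c : R) :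
  ex_RInt f a b -> RInt (fun x => c * f x) a b = c * RInt f a b.
Proof. intros H. apply (RInt_scal (V := R_CompleteNormedModule) f); auto. Qed.

Lemma RInt_lin (f g : R -> R) (lo hi a b : R) : ex_RInt f lo hi -> ex_RInt g lo hi ->
  RInt (fun t => a * f t + b * g t) lo hi = a * RInt f lo hi + b * RInt g lo hi.
Proof.
  intros Hf Hg.
  rewrite (RInt_plus (V := R_CompleteNormedModule) (fun t => a * f t) (fun t => b * g t)).
  - rewrite !RInt_scal_R; auto.
  - apply (ex_RInt_scal (V := R_NormedModule) f); auto.
  - apply (ex_RInt_scal (V := R_NormedModule) g); auto.
Qed.

Lemma RInt_zero (a b : R) : RInt (fun _ : R => 0) a b = 0.
Proof. rewrite (RInt_const (V := R_CompleteNormedModule)). apply Rmult_0_r. Qed.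

Definition dint (L B : R) (F : R -> R -> R) : R :=
  RInt (fun x => RInt (fun y => F x y) (- B) B) 0 L.

Lemma IntOmega_dint (L B : R) (F G : R -> R -> R) : 0 < L -> 0 < B -> cont2 G ->
  (forall x y, 0 <= x <= L -> - B <= y <= B -> F x y = G x y) ->
  IntOmega L B F = dint L B G.
Proof.
  intros HL HB HG E. unfold IntOmega, dint.
  assert (Ei : forall x, 0 <= x <= L ->
    Integ (fun y => F x y) (- B) B = RInt (fun y => G x y) (- B) B).
  { intros x Hx.
    assert (Hex : ex_RInt (fun y => F x y) (- B) B).
    { eapply ex_RInt_ext; [| apply (cont2_ex_RInt_2 G); auto]. intros y Hy.
      rewrite Rmin_left, Rmax_right in Hy by lra. symmetry; apply E; lra. }
    rewrite Integ_RInt by exact Hex. apply RInt_ext. intros y Hy.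
    rewrite Rmin_left, Rmax_right in Hy by lra. apply E; lra. }
  assert (Hex : ex_RInt (fun x => Integ (fun y => F x y) (- B) B) 0 L).
  { eapply ex_RInt_ext; [| apply (cont2_ex_iterated G); auto]. intros x Hx.
    rewrite Rmin_left, Rmax_right in Hx by lra. symmetry; apply Ei; lra. }
  rewrite Integ_RInt by exact Hex. apply RInt_ext. intros x Hx.
  rewrite Rmin_left, Rmax_right in Hx by lra. apply Ei; lra.
Qed.

Section DoubleIntegral.
Variables L B : R.
Hypothesis HL : 0 < L.
Hypothesis HB : 0 < B.

Lemma dint_ext (F G : R -> R -> R) :
  (forall x y, 0 < x < L -> - B < y < B -> F x y = G x y) -> dint L B F = dint L B G.
Proof.
  intros H. unfold dint. apply RInt_ext. intros x Hx.
  rewrite Rmin_left, Rmax_right in Hx by lra.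
  apply RInt_ext. intros y Hy.
  rewrite Rmin_left, Rmax_right in Hy by lra. apply H; auto.
Qed.

Lemma dint_lin (F G : R -> R -> R) (a b : R) : cont2 F -> cont2 G ->
  dint L B (fun x y => a * F x y + b * G x y) = a * dint L B F + b * dint L B G.
Proof.
  intros HF HG. unfold dint.
  rewrite <- RInt_lin by (apply cont2_ex_iterated; auto).
  apply RInt_ext. intros x _. apply RInt_lin; apply cont2_ex_RInt_2; auto.
Qed.

Lemma dint_scal (F : R -> R -> R) (c : R) : cont2 F ->
  dint L B (fun x y => c * F x y) = c * dint L B F.
Proof.
  intros HF. unfold dint. rewrite <- RInt_scal_R by (apply cont2_ex_iterated; auto).
  apply RInt_ext. intros. apply RInt_scal_R, cont2_ex_RInt_2; auto.
Qed.

Lemma dint_le (F G : R -> R -> R) : cont2 F -> cont2 G ->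
  (forall x y, 0 < x < L -> - B < y < B -> F x y <= G x y) -> dint L B F <= dint L B G.
Proof.
  intros HF HG H. unfold dint.
  apply RInt_le; try lra; try (apply cont2_ex_iterated; auto).
  intros x Hx. apply RInt_le; try lra; try (apply cont2_ex_RInt_2; auto).
  intros; apply H; auto.
Qed.

Lemma dint_zero : dint L B (fun _ _ => 0) = 0.
Proof. unfold dint. rewrite (RInt_ext _ (fun _ => 0)) by (intros; apply RInt_zero). apply RInt_zero. Qed.

Lemma dint_ge0 (F : R -> R -> R) : cont2 F ->
  (forall x y, 0 < x < L -> - B < y < B -> 0 <= F x y) -> 0 <= dint L B F.
Proof.
  intros. rewrite <- dint_zero. apply dint_le; auto. cont_tac.
Qed.

End DoubleIntegral.

Lemma RInt_deriv_t (B : R) (h ht : R -> R -> R -> R) (x t : R) :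
  cont3 h -> cont3 ht -> dt_is h ht ->
  is_derive (fun s => RInt (fun y => h x y s) (- B) B) t (RInt (fun y => ht x y t) (- B) B).
Proof.
  intros Hh Hht Hd.
  assert (HD : forall s y, is_derive (fun z => h x y z) s (ht x y s)).
  { intros s y. apply is_derive_Reals, Hd. }
  eapply is_derive_eq.
  - apply (is_derive_RInt_param (fun s y => h x y s) (- B) B t).
    + exists (mkposreal 1 Rlt_0_1). intros s' _ y _. eexists. apply HD.
    + intros y _. apply continuity_2d_pt_ext with (f := fun s v => ht x v s).
      * intros s v. symmetry. apply is_derive_unique, HD.
      * apply cont2_2d.
        apply (cont3_comp ht (fun _ _ _ => x) (fun _ y _ => y) (fun x _ _ => x)); cont_tac.
    + exists (mkposreal 1 Rlt_0_1). intros s' _.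
      apply ex_RInt_cont. intros y. apply (cont3_continuous_3 (fun _ _ y => h x y s') 0 0).
      apply (cont3_comp h (fun _ _ _ => x) (fun _ _ t => t) (fun _ _ _ => s')); cont_tac.
  - apply RInt_ext. intros y _. apply is_derive_unique, HD.
Qed.

Lemma dint_deriv_t (L B : R) (h ht : R -> R -> R -> R) (t : R) :
  cont3 h -> cont3 ht -> dt_is h ht ->
  is_derive (fun s => dint L B (fun x y => h x y s)) t (dint L B (fun x y => ht x y t)).
Proof.
  intros Hh Hht Hd. unfold dint.
  set (I := fun s x => RInt (fun y => h x y s) (- B) B).
  set (J := fun s x => RInt (fun y => ht x y s) (- B) B).
  assert (HI : forall s x, is_derive (fun z => I z x) s (J s x)).
  { intros s x. apply RInt_deriv_t; auto. }
  eapply is_derive_eq.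
  - apply (is_derive_RInt_param I 0 L t).
    + exists (mkposreal 1 Rlt_0_1). intros s' _ x _. eexists. apply HI.
    + intros x _. apply continuity_2d_pt_ext with (f := J).
      * intros s v. symmetry. apply is_derive_unique, HI.
      * unfold J. apply (param_integral_cont (fun p q y => ht q y p)).
        apply (cont3_comp ht (fun _ y _ => y) (fun _ _ t => t) (fun x _ _ => x)); cont_tac.
    + exists (mkposreal 1 Rlt_0_1). intros s' _.
      apply (cont2_ex_iterated (fun x y => h x y s')), cont3_freeze; auto.
  - apply RInt_ext. intros x _. apply is_derive_unique, HI.
Qed.

Lemma cont_mult (f g : R -> R) (x : R) :
  continuous f x -> continuous g x -> continuous (fun y => f y * g y) x.
Proof. intros; apply (continuous_mult f g); auto. Qed.

Lemma cont_plus (f g : R -> R) (x : R) :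
  continuous f x -> continuous g x -> continuous (fun y => f y + g y) x.
Proof. intros; apply (continuous_plus (V := R_NormedModule) f g); auto. Qed.

Lemma deriv_continuous (f : R -> R) (x l : R) : is_derive f x l -> continuous f x.
Proof. intros H. apply (ex_derive_continuous (K := R_AbsRing) (V := R_NormedModule)). eexists; apply H. Qed.

(* The Riccati equation w' = -(k^2 + w^2) has a solution on [a,b] when
   k(b-a) < pi: w = k cot(k(x-a) + c) with c = (pi - k(b-a))/2, whose cotangent
   argument stays in (0,pi). *)
Lemma riccati_solution (a b k : R) : a < b -> 0 < k -> k * (b - a) < PI ->
  exists w : R -> R, forall x, a <= x <= b -> is_derive w x (- (k * k + w x * w x)).
Proof.
  intros Hab Hk HkPI.
  set (c := (PI - k * (b - a)) / 2).
  set (th := fun x => k * (x - a) + c).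
  exists (fun x => k * cos (th x) / sin (th x)). intros x Hx.
  assert (Hs : 0 < sin (th x)) by (apply sin_gt_0; unfold th, c; nra).
  unfold th in *. auto_derive.
  - unfold Rminus in *. lra.
  - unfold Rminus in *. field. lra.
Qed.

(* Wirtinger's inequality below the sharp constant: if f(a) = f(b) = 0 and
   k(b-a) < pi, then k^2 int f^2 <= int f'^2.  For a Riccati solution w one has
   (w f^2)' = f'^2 - k^2 f^2 - (f' - w f)^2, and w f^2 vanishes at a and b. *)
Lemma wirtinger_subcritical (f f' : R -> R) (a b k : R) :
  a < b -> 0 < k -> k * (b - a) < PI ->
  (forall x, is_derive f x (f' x)) -> (forall x, continuous f' x) -> f a = 0 -> f b = 0 ->
  k * k * RInt (fun x => f x * f x) a b <= RInt (fun x => f' x * f' x) a b.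
Proof.
  intros Hab Hk HkPI Hf Hf' Ha Hb.
  destruct (riccati_solution a b k Hab Hk HkPI) as [w Hw].
  set (H := fun x => w x * (f x * f x)).
  set (H' := fun x => - (k * k + w x * w x) * (f x * f x) + w x * (f' x * f x + f x * f' x)).
  assert (HH : forall x, a <= x <= b -> is_derive H x (H' x)).
  { intros x Hx. unfold H. eapply is_derive_eq.
    - apply deriv_mult; [apply Hw; auto | apply deriv_mult; apply Hf].
    - unfold H'. ring. }
  assert (Hfc : forall x, continuous f x) by (intros; eapply deriv_continuous, Hf).
  assert (HH'c : forall x, a <= x <= b -> continuous H' x).
  { intros x Hx. unfold H'.
    assert (Hwc : continuous w x) by (eapply deriv_continuous, Hw; auto).
    apply cont_plus; apply cont_mult; auto.
    - apply (continuous_opp (V := R_NormedModule)), cont_plus; [apply continuous_const |].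
      apply cont_mult; auto.
    - apply cont_mult; auto.
    - apply cont_plus; apply cont_mult; auto. }
  assert (HI : RInt H' a b = 0).
  { apply is_RInt_unique. replace 0 with (minus (H b) (H a)).
    - apply (is_RInt_derive (V := R_CompleteNormedModule) H H');
        intros x Hx; rewrite Rmin_left, Rmax_right in Hx by lra; auto.
    - unfold H. rewrite Ha, Hb. unfold minus, plus, opp; simpl. ring. }
  assert (Hexf : ex_RInt (fun x => f x * f x) a b).
  { apply ex_RInt_cont. intros; apply cont_mult; auto. }
  assert (Hexf' : ex_RInt (fun x => f' x * f' x) a b).
  { apply ex_RInt_cont. intros; apply cont_mult; auto. }
  assert (Hle : RInt H' a b <= RInt (fun x => 1 * (f' x * f' x) + (- (k * k)) * (f x * f x)) a b).
  { apply RInt_le; [lra | | |].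
    - apply (@ex_RInt_continuous R_CompleteNormedModule). intros x Hx.
      rewrite Rmin_left, Rmax_right in Hx by lra. apply HH'c; auto.
    - apply (ex_RInt_plus (V := R_NormedModule) (fun x => 1 * (f' x * f' x))
               (fun x => (- (k * k)) * (f x * f x)));
        apply (ex_RInt_scal (V := R_NormedModule)); auto.
    - intros x Hx. unfold H'.
      pose proof (Rle_0_sqr (f' x - w x * f x)) as Hq; unfold Rsqr in Hq; nra. }
  rewrite RInt_lin in Hle; auto. lra.
Qed.

Lemma sup_bound_sq (K N X : R) : 0 < K -> 0 <= N ->
  (forall k, 0 < k -> k < K -> k * k * N <= X) -> K * K * N <= X.
Proof.
  intros HK HN H. destruct (Rle_or_lt (K * K * N) X) as [h | h]; auto. exfalso.
  assert (HX0 : 0 <= X) by (pose proof (H (K / 2) ltac:(lra) ltac:(lra)); nra).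
  assert (HN0 : 0 < N) by (destruct (Rle_lt_or_eq_dec 0 N HN); auto; subst; nra).
  assert (HKN : 0 < K * K * N) by (apply Rmult_lt_0_compat; nra).
  set (s := (K * K * N - X) / (4 * (K * K * N))).
  assert (Hs0 : 0 < s) by (apply Rdiv_lt_0_compat; lra).
  assert (Hs1 : s <= 1 / 4).
  { unfold s. apply Rmult_le_reg_r with (4 * (K * K * N)); [lra |]. field_simplify; lra. }
  assert (Hsd : s * (4 * (K * K * N)) = K * K * N - X) by (unfold s; field; lra).
  pose proof (H (K * (1 - s)) ltac:(nra) ltac:(nra)). nra.
Qed.

Lemma wirtinger (f f' : R -> R) (a b : R) : a < b ->
  (forall x, is_derive f x (f' x)) -> (forall x, continuous f' x) -> f a = 0 -> f b = 0 ->
  PI / (b - a) * (PI / (b - a)) * RInt (fun x => f x * f x) a b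
  <= RInt (fun x => f' x * f' x) a b.
Proof.
  intros Hab Hf Hf' Ha Hb.
  assert (Hfc : forall x, continuous f x) by (intros; eapply deriv_continuous, Hf).
  apply sup_bound_sq.
  - apply Rdiv_lt_0_compat; [apply PI_RGT_0 | lra].
  - apply RInt_ge_0; [lra | | intros; apply Rle_0_sqr].
    apply ex_RInt_cont. intros; apply cont_mult; auto.
  - intros k Hk HkK. apply wirtinger_subcritical; auto.
    apply Rmult_lt_compat_r with (r := b - a) in HkK; [| lra].
    replace (PI / (b - a) * (b - a)) with PI in HkK by (field; lra). exact HkK.
Qed.

(* One-dimensional sup bound: if f vanishes at both ends of [lo,hi], then
   f(x)^2 <= int_lo^hi |f f'|, since 2 f f' = (f^2)' integrates to f(x)^2
   from either end. *)
Lemma sq_le_RInt_abs (f f' : R -> R) (lo hi x : R) : lo <= x <= hi ->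
  (forall s, is_derive f s (f' s)) -> (forall s, continuous f' s) -> f lo = 0 -> f hi = 0 ->
  f x * f x <= RInt (fun s => Rabs (f s * f' s)) lo hi.
Proof.
  intros Hx Hd Hc Hlo Hhi.
  set (D := fun s => f' s * f s + f s * f' s).
  assert (Hfc : forall s, continuous f s) by (intros; eapply deriv_continuous, Hd).
  assert (HD : forall s, is_derive (fun s => f s * f s) s (D s)) by (intros; apply deriv_mult; apply Hd).
  assert (HDc : forall s, continuous D s) by (intros; unfold D; apply cont_plus; apply cont_mult; auto).
  assert (HaDc : forall s, continuous (fun s => Rabs (D s)) s) by (intros; apply continuous_Rabs_comp; auto).
  assert (I1 : RInt D lo x = f x * f x - f lo * f lo).
  { apply is_RInt_unique, (is_RInt_derive (V := R_CompleteNormedModule) (fun s => f s * f s) D); auto. }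
  assert (I2 : RInt D x hi = f hi * f hi - f x * f x).
  { apply is_RInt_unique, (is_RInt_derive (V := R_CompleteNormedModule) (fun s => f s * f s) D); auto. }
  rewrite Hlo in I1. rewrite Hhi in I2.
  pose proof (abs_RInt_le D lo x ltac:(lra) (ex_RInt_cont _ _ _ HDc)) as A1.
  pose proof (abs_RInt_le D x hi ltac:(lra) (ex_RInt_cont _ _ _ HDc)) as A2.
  pose proof (RInt_Chasles (V := R_CompleteNormedModule) (fun s => Rabs (D s)) lo x hi
                (ex_RInt_cont _ _ _ HaDc) (ex_RInt_cont _ _ _ HaDc)) as Ch.
  simpl in Ch. unfold plus in Ch; simpl in Ch.
  assert (E : RInt (fun s => Rabs (D s)) lo hi = 2 * RInt (fun s => Rabs (f s * f' s)) lo hi).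
  { rewrite <- RInt_scal_R.
    - apply RInt_ext. intros s _. unfold D.
      replace (f' s * f s + f s * f' s) with (2 * (f s * f' s)) by ring.
      rewrite Rabs_mult, Rabs_right; lra.
    - apply ex_RInt_cont. intros; apply continuous_Rabs_comp, cont_mult; auto. }
  rewrite I1 in A1. rewrite I2 in A2.
  pose proof (Rle_abs (f x * f x - 0 * 0)). pose proof (Rle_abs (0 * 0 - f x * f x)).
  rewrite <- Rabs_Ropp in A2. replace (- (0 * 0 - f x * f x)) with (f x * f x - 0 * 0) in A2 by ring.
  lra.
Qed.

Lemma discriminant_le (a x c : R) :
  (forall l, 0 <= l * l * a + l * (-2) * x + c) -> 0 <= a -> x * x <= a * c.
Proof.
  intros H Ha. destruct (Rle_lt_or_eq_dec 0 a Ha) as [Ap | <-].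
  - pose proof (H (x / a)) as H1.
    replace (x / a * (x / a) * a + x / a * -2 * x + c) with (c - x * x / a) in H1 by (field; lra).
    apply Rmult_le_reg_r with (/ a); [apply Rinv_0_lt_compat; auto |].
    replace (a * c * / a) with c by (field; lra). unfold Rdiv in H1. lra.
  - destruct (Req_dec x 0) as [-> | Xn]; [lra |].
    pose proof (H ((c + 1) / (2 * x))) as H1.
    replace ((c + 1) / (2 * x) * ((c + 1) / (2 * x)) * 0 + (c + 1) / (2 * x) * -2 * x + c)
      with (-1) in H1 by (field; auto). lra.
Qed.

Lemma dint_cauchy_schwarz (L B : R) (P Q : R -> R -> R) : 0 < L -> 0 < B -> cont2 P -> cont2 Q ->
  dint L B (fun x y => Rabs (P x y * Q x y)) * dint L B (fun x y => Rabs (P x y * Q x y))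
  <= dint L B (fun x y => P x y * P x y) * dint L B (fun x y => Q x y * Q x y).
Proof.
  intros HL HB HP HQ. apply discriminant_le.
  - intros l.
    assert (E : dint L B (fun x y => (l * l) * (P x y * P x y) +
                  1 * ((-2 * l) * Rabs (P x y * Q x y) + 1 * (Q x y * Q x y)))
             = l * l * dint L B (fun x y => P x y * P x y)
               + l * -2 * dint L B (fun x y => Rabs (P x y * Q x y))
               + dint L B (fun x y => Q x y * Q x y)).
    { rewrite (dint_lin L B (fun x y => P x y * P x y)) by cont_tac.
      rewrite (dint_lin L B (fun x y => Rabs (P x y * Q x y))) by cont_tac. ring. }
    rewrite <- E. apply dint_ge0; auto; [cont_tac |].
    intros x y _ _. rewrite Rabs_mult.
    pose proof (Rle_0_sqr (l * Rabs (P x y) - Rabs (Q x y))). unfold Rsqr in H.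
    assert (EP : P x y * P x y = Rabs (P x y) * Rabs (P x y)).
    { rewrite <- Rabs_mult. symmetry. apply Rabs_right. nra. }
    assert (EQ : Q x y * Q x y = Rabs (Q x y) * Rabs (Q x y)).
    { rewrite <- Rabs_mult. symmetry. apply Rabs_right. nra. }
    rewrite EP, EQ. nra.
  - apply dint_ge0; auto; [cont_tac |]. intros; apply Rle_0_sqr.
Qed.

Lemma cont2_of_x (f : R -> R) : (forall x, continuous f x) -> cont2 (fun x _ => f x).
Proof.
  intros H x y t eps He.
  destruct (proj1 (filterlim_locally f (f x)) (H x) (mkposreal eps He)) as [d Hd].
  exists d. split; [apply cond_pos |]. intros x' y' t' Hx _ _. apply Hd, Hx.
Qed.

Lemma cont2_of_y (f : R -> R) : (forall y, continuous f y) -> cont2 (fun _ y => f y).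
Proof.
  intros H x y t eps He.
  destruct (proj1 (filterlim_locally f (f y)) (H y) (mkposreal eps He)) as [d Hd].
  exists d. split; [apply cond_pos |]. intros x' y' t' _ Hy _. apply Hd, Hy.
Qed.

Section RectangleInequalities.
Variables (L B : R) (F Fx Fy : R -> R -> R).
Hypothesis HL : 0 < L.
Hypothesis HB : 0 < B.
Hypothesis HF : cont2 F.
Hypothesis HFx : cont2 Fx.
Hypothesis HFy : cont2 Fy.
Hypothesis HdX : forall x y, is_derive (fun s => F s y) x (Fx x y).
Hypothesis HdY : forall x y, is_derive (fun s => F x s) y (Fy x y).
Hypothesis Hbx : forall y, - B <= y <= B -> F 0 y = 0 /\ F L y = 0.
Hypothesis Hby : forall x, 0 <= x <= L -> F x B = 0 /\ F x (- B) = 0.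

(* Poincare inequality in x: (pi/L)^2 ||F||^2 <= ||Fx||^2 (Wirtinger on each horizontal line). *)
Lemma poincare_x : PI / L * (PI / L) * dint L B (fun x y => F x y * F x y)
   <= dint L B (fun x y => Fx x y * Fx x y).
Proof.
  unfold dint.
  rewrite (fubini (fun x y => F x y * F x y) ltac:(cont_tac) 0 L (- B) B HL).
  rewrite (fubini (fun x y => Fx x y * Fx x y) ltac:(cont_tac) 0 L (- B) B HL).
  assert (Hin : forall G, cont2 G -> ex_RInt (fun y => RInt (fun x => G x y) 0 L) (- B) B).
  { intros G HG. apply ex_RInt_cont. intros; apply cont2_inner_cont_1; auto. }
  rewrite <- RInt_scal_R by (apply (Hin (fun x y => F x y * F x y)); cont_tac).
  apply RInt_le; [lra | | |].
  - apply (ex_RInt_scal (V := R_NormedModule) (fun y => RInt (fun x => F x y * F x y) 0 L)).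
    apply (Hin (fun x y => F x y * F x y)); cont_tac.
  - apply (Hin (fun x y => Fx x y * Fx x y)); cont_tac.
  - intros y Hy. replace L with (L - 0) at 1 2 by ring.
    apply (wirtinger (fun s => F s y) (fun s => Fx s y)); auto.
    + intros; apply cont2_continuous_1; auto.
    + apply Hbx; lra.
    + apply Hbx; lra.
Qed.

Lemma poincare_y : PI / (2 * B) * (PI / (2 * B)) * dint L B (fun x y => F x y * F x y)
   <= dint L B (fun x y => Fy x y * Fy x y).
Proof.
  rewrite <- dint_scal by cont_tac. unfold dint.
  apply RInt_le; [lra | | |].
  - apply (cont2_ex_iterated (fun x y => PI / (2 * B) * (PI / (2 * B)) * (F x y * F x y))).
    cont_tac.
  - apply (cont2_ex_iterated (fun x y => Fy x y * Fy x y)). cont_tac.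
  - intros x Hx.
    rewrite RInt_scal_R by (apply (cont2_ex_RInt_2 (fun x y => F x y * F x y)); cont_tac).
    replace (2 * B) with (B - - B) by ring.
    apply (wirtinger (fun s => F x s) (fun s => Fy x s)); auto.
    + lra.
    + intros; apply cont2_continuous_2; auto.
    + apply Hby; lra.
    + apply Hby; lra.
Qed.

(* The quartic integral is bounded by the product of the integrals of |F Fx|
   and |F Fy|: F^2 is dominated both by the integral a(y) of |F Fx| along its
   horizontal line and by the integral b(x) of |F Fy| along its vertical line. *)
Lemma quartic_le_product : dint L B (fun x y => (F x y * F x y) * (F x y * F x y)) <=
  dint L B (fun x y => Rabs (F x y * Fx x y)) * dint L B (fun x y => Rabs (F x y * Fy x y)).
Proof.
  set (a := fun y => RInt (fun s => Rabs (F s y * Fx s y)) 0 L).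
  set (b := fun x => RInt (fun s => Rabs (F x s * Fy x s)) (- B) B).
  assert (Ha : forall x y, 0 <= x <= L -> - B <= y <= B -> F x y * F x y <= a y).
  { intros x y Hx Hy. apply (sq_le_RInt_abs (fun s => F s y) (fun s => Fx s y)); auto.
    - intros; apply cont2_continuous_1; auto.
    - apply Hbx; auto.
    - apply Hbx; auto. }
  assert (Hb : forall x y, 0 <= x <= L -> - B <= y <= B -> F x y * F x y <= b x).
  { intros x y Hx Hy. apply (sq_le_RInt_abs (fun s => F x s) (fun s => Fy x s)); auto.
    - intros; apply cont2_continuous_2; auto.
    - apply Hby; auto.
    - apply Hby; auto. }
  assert (Hac : forall y, continuous a y).
  { intros y. apply (cont2_inner_cont_1 (fun s y => Rabs (F s y * Fx s y))). cont_tac. }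
  assert (Hbc : forall x, continuous b x).
  { intros x. apply (cont2_inner_cont_2 (fun x s => Rabs (F x s * Fy x s))). cont_tac. }
  apply Rle_trans with (dint L B (fun x y => b x * a y)).
  { apply dint_le; auto; [cont_tac | |].
    - unfold cont2. apply cont3_mult; [apply (cont2_of_x b) | apply (cont2_of_y a)]; auto.
    - intros x y Hx Hy. pose proof (Ha x y ltac:(lra) ltac:(lra)).
      pose proof (Hb x y ltac:(lra) ltac:(lra)). apply Rmult_le_compat; nra. }
  (* the product integrand separates, and Fubini identifies int a with the double integral *)
  assert (Hsep : dint L B (fun x y => b x * a y) = RInt a (- B) B * RInt b 0 L).
  { unfold dint. rewrite <- RInt_scal_R by (apply ex_RInt_cont; auto).
    apply RInt_ext. intros x _. rewrite RInt_scal_R by (apply ex_RInt_cont; auto).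
    apply Rmult_comm. }
  assert (Hfub : RInt a (- B) B = dint L B (fun x y => Rabs (F x y * Fx x y))).
  { unfold dint, a. symmetry. apply fubini; auto. cont_tac. }
  rewrite Hsep, Hfub. apply Rle_refl.
Qed.

(* Arithmetic core of the Ladyzhenskaya bound: X^2 <= N Nx and Y^2 <= N Ny
   give X Y <= N (Nx + Ny) / 2 (Cauchy-Schwarz, then AM-GM). *)
Lemma product_le_amgm (X Y N Nx Ny : R) : 0 <= X -> 0 <= Y -> 0 <= N -> 0 <= Nx -> 0 <= Ny ->
  X * X <= N * Nx -> Y * Y <= N * Ny -> X * Y <= N * (Nx + Ny) / 2.
Proof.
  intros X0 Y0 N0 Nx0 Ny0 CX CY.
  destruct (Rle_or_lt (X * Y) (N * (Nx + Ny) / 2)) as [h | h]; auto.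
  assert (h2 : (X * X) * (Y * Y) <= (N * Nx) * (N * Ny)) by (apply Rmult_le_compat; nra).
  assert (h3 : (N * Nx) * (N * Ny) <= (N * (Nx + Ny) / 2) * (N * (Nx + Ny) / 2)).
  { pose proof (Rle_0_sqr (Nx - Ny)). unfold Rsqr in H. nra. }
  assert (h4 : (N * (Nx + Ny) / 2) * (N * (Nx + Ny) / 2) < (X * Y) * (X * Y)).
  { apply Rmult_le_0_lt_compat; nra. }
  nra.
Qed.

Lemma ladyzhenskaya : dint L B (fun x y => (F x y * F x y) * (F x y * F x y)) <=
  dint L B (fun x y => F x y * F x y) *
  (dint L B (fun x y => Fx x y * Fx x y) + dint L B (fun x y => Fy x y * Fy x y)) / 2.
Proof.
  eapply Rle_trans; [apply quartic_le_product |].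
  assert (Hsq : forall G, cont2 G -> 0 <= dint L B (fun x y => G x y * G x y)).
  { intros G HG. apply dint_ge0; auto; [cont_tac | intros; apply Rle_0_sqr]. }
  assert (Habs : forall G, cont2 G -> 0 <= dint L B (fun x y => Rabs (F x y * G x y))).
  { intros G HG. apply dint_ge0; auto; [cont_tac | intros; apply Rabs_pos]. }
  apply product_le_amgm; auto using dint_cauchy_schwarz.
Qed.

(* The dissipation estimate: under the smallness condition on ||F||^2, the
   quartic term is absorbed (Ladyzhenskaya) and the quadratic terms are
   controlled by the Poincare inequalities, leaving a decay rate A2 with
   2 A2 = pi^2 (3/L^2 + 1/(4B^2)) - 1. *)
Lemma dissipation_bound (A2 : R) :
  2 * A2 = PI ^ 2 * (3 / L ^ 2 + 1 / (4 * B ^ 2)) - 1 ->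
  dint L B (fun x y => F x y * F x y)
    <= A2 / (2 * PI ^ 2 * (1 / L ^ 2 + 1 / (4 * B ^ 2))) ->
  dint L B (fun x y => F x y * F x y + (F x y * F x y) * (F x y * F x y) / 2
                       - 3 * (Fx x y * Fx x y) - Fy x y * Fy x y)
  <= - A2 * dint L B (fun x y => F x y * F x y).
Proof.
  intros HA Hsmall.
  pose proof poincare_x as PX. pose proof poincare_y as PY. pose proof ladyzhenskaya as LD.
  rewrite (dint_ext L B HL HB _ (fun x y => 1 * (F x y * F x y) + 1 *
     ((1 / 2) * ((F x y * F x y) * (F x y * F x y)) + 1 *
      ((-3) * (Fx x y * Fx x y) + (-1) * (Fy x y * Fy x y))))) by (intros; field).
  rewrite !dint_lin by cont_tac.
  set (N := dint L B (fun x y => F x y * F x y)) in *.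
  set (Nx := dint L B (fun x y => Fx x y * Fx x y)) in *.
  set (Ny := dint L B (fun x y => Fy x y * Fy x y)) in *.
  set (Q4 := dint L B (fun x y => (F x y * F x y) * (F x y * F x y))) in *.
  assert (N0 : 0 <= N) by (apply dint_ge0; auto; [cont_tac | intros; apply Rle_0_sqr]).
  set (P := PI ^ 2). set (X := 1 / L ^ 2). set (Y := 1 / (4 * B ^ 2)).
  assert (HP : 0 < P) by (apply pow_lt, PI_RGT_0).
  assert (HX : 0 < X) by (apply Rdiv_lt_0_compat; [lra | apply pow_lt; exact HL]).
  assert (HY : 0 < Y).
  { apply Rdiv_lt_0_compat; [lra | apply Rmult_lt_0_compat; [lra | apply pow_lt; exact HB]]. }
  replace (PI / L * (PI / L)) with (P * X) in PX by (unfold P, X; field; lra).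
  replace (PI / (2 * B) * (PI / (2 * B))) with (P * Y) in PY by (unfold P, Y; field; lra).
  replace (PI ^ 2 * (3 / L ^ 2 + 1 / (4 * B ^ 2)) - 1) with (P * (3 * X + Y) - 1) in HA
    by (unfold P, X, Y; field; lra).
  fold P X Y in Hsmall.
  assert (HPXY : 0 < P * (X + Y)) by nra.
  assert (HN : N * (2 * P * (X + Y)) <= A2).
  { apply Rmult_le_compat_r with (r := 2 * P * (X + Y)) in Hsmall; [| lra].
    replace (A2 / (2 * P * (X + Y)) * (2 * P * (X + Y))) with A2 in Hsmall by (field; lra).
    exact Hsmall. }
  (* smallness makes the coefficients 3 - N/4 and 1 - N/4 positive *)
  assert (HN34 : N < 3 / 4) by nra.
  assert (S1 : (3 - N / 4) * (P * X * N) <= (3 - N / 4) * Nx) by (apply Rmult_le_compat_l; lra).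
  assert (S2 : (1 - N / 4) * (P * Y * N) <= (1 - N / 4) * Ny) by (apply Rmult_le_compat_l; lra).
  assert (S3 : N * N * (P * (X + Y)) <= N * (A2 / 2)) by nra.
  nra.
Qed.

End RectangleInequalities.

Lemma deriv_zero_inside (f : R -> R) (lo hi y l : R) :
  (forall s, lo <= s <= hi -> f s = 0) -> lo < y < hi -> is_derive f y l -> l = 0.
Proof.
  intros Hz Hy Hd.
  assert (Hl : locally y (fun s => f s = 0)).
  { assert (He : 0 < Rmin (y - lo) (hi - y)) by (apply Rmin_pos; lra).
    exists (mkposreal _ He). intros s Hs. apply Hz.
    change (Rabs (s - y) < Rmin (y - lo) (hi - y)) in Hs.
    pose proof (Rmin_l (y - lo) (hi - y)). pose proof (Rmin_r (y - lo) (hi - y)).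
    revert Hs. unfold Rabs. destruct (Rcase_abs _); lra. }
  assert (H0 : is_derive (fun _ : R => 0) y l) by (apply (is_derive_ext_loc f); auto).
  apply is_derive_unique in H0. rewrite Derive_const in H0. auto.
Qed.

Lemma nonincreasing (f f' : R -> R) : (forall t, is_derive f t (f' t)) ->
  (forall t, 0 < t -> f' t <= 0) -> forall t, 0 <= t -> f t <= f 0.
Proof.
  intros Hd Hn t Ht. destruct (Rle_lt_or_eq_dec 0 t Ht) as [Hp | <-]; [| lra].
  destruct (MVT_cor2 f f' 0 t Hp) as [c [Hc1 Hc2]].
  - intros c _. apply is_derive_Reals, Hd.
  - pose proof (Hn c ltac:(lra)). nra.
Qed.

(* Gronwall's lemma in differential form: f' <= -c f on (0,oo) gives
   f(t) <= exp(-c t) f(0), since exp(c t) f(t) is nonincreasing. *)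
Lemma gronwall (f f' : R -> R) (c : R) : (forall t, is_derive f t (f' t)) ->
  (forall t, 0 < t -> f' t <= - c * f t) -> forall t, 0 <= t -> f t <= exp (- c * t) * f 0.
Proof.
  intros Hd Hn t Ht.
  set (g := fun s => exp (c * s) * f s).
  assert (Hg : forall s, is_derive g s (c * exp (c * s) * f s + exp (c * s) * f' s)).
  { intros s. apply (deriv_mult (fun s => exp (c * s)) f); [| apply Hd].
    assert (H : is_derive (fun s => exp (c * s)) s (c * exp (c * s))).
    { auto_derive; [exact I | ring]. }
    exact H. }
  assert (Hgt : g t <= g 0).
  { apply (nonincreasing g _ Hg); [| exact Ht].
    intros s Hs. pose proof (Hn s Hs). pose proof (exp_pos (c * s)).
    assert (exp (c * s) * f' s <= exp (c * s) * (- c * f s)) by (apply Rmult_le_compat_l; lra).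
    nra. }
  unfold g in Hgt. rewrite Rmult_0_r, exp_0, Rmult_1_l in Hgt.
  replace (f t) with (exp (- c * t) * (exp (c * t) * f t)).
  - apply Rmult_le_compat_l; [left; apply exp_pos | exact Hgt].
  - rewrite <- Rmult_assoc, <- exp_plus. replace (- c * t + c * t) with 0 by ring.
    rewrite exp_0. ring.
Qed.

Section Solution.
Variables (L B : R) (u ut ux uxx uxxx uy uxy uxyy : R -> R -> R -> R).
Hypothesis HL : 0 < L.
Hypothesis HB : 0 < B.
Hypothesis Hdt : dt_is u ut.
Hypothesis Hdx1 : dx_is u ux.
Hypothesis Hdx2 : dx_is ux uxx.
Hypothesis Hdx3 : dx_is uxx uxxx.
Hypothesis Hdy1 : dy_is u uy.
Hypothesis Hdxy : dx_is uy uxy.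
Hypothesis Hdyxy : dy_is uxy uxyy.
Hypothesis Cu : cont3 u.
Hypothesis Cut : cont3 ut.
Hypothesis Cux : cont3 ux.
Hypothesis Cuxxx : cont3 uxxx.
Hypothesis Cuy : cont3 uy.
Hypothesis Cuxy : cont3 uxy.
Hypothesis Cuxyy : cont3 uxyy.
Hypothesis Heq : forall x y t, 0 < x < L -> - B < y < B -> 0 < t ->
  ut x y t + ux x y t + (u x y t) ^ 2 * ux x y t + uxxx x y t + uxyy x y t = 0.
Hypothesis Hbc1 : forall x t, 0 <= x <= L -> 0 <= t -> u x B t = 0 /\ u x (- B) t = 0.
Hypothesis Hbc2 : forall y t, - B <= y <= B -> 0 <= t ->
  u 0 y t = 0 /\ u L y t = 0 /\ ux L y t = 0.

Definition energy_density (al be x y t : R) : R := (al + be * x) * (u x y t * u x y t).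
Definition energy_density_t (al be x y t : R) : R :=
  (al + be * x) * (ut x y t * u x y t + u x y t * ut x y t).
Definition energy (al be t : R) : R := dint L B (fun x y => energy_density al be x y t).

Definition dissipation_density (x y t : R) : R :=
  u x y t * u x y t + (u x y t * u x y t) * (u x y t * u x y t) / 2
  - 3 * (ux x y t * ux x y t) - uy x y t * uy x y t.

(* Multiplying the equation by (al + be x) u and integrating by parts produces
   an x-flux and a y-flux whose divergences account for all derivative terms. *)
Definition flux_x (al be x y t : R) : R :=
  (al + be * x) * (u x y t * u x y t) * (1 / 2)
  + (al + be * x) * ((u x y t * u x y t) * (u x y t * u x y t)) * (1 / 4)
  + (al + be * x) * (u x y t * uxx x y t)
  - be * (u x y t * ux x y t)
  - (al + be * x) * (ux x y t * ux x y t) * (1 / 2)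
  - (al + be * x) * (uy x y t * uy x y t) * (1 / 2).

Definition flux_x_dx (al be x y t : R) : R :=
  be / 2 * dissipation_density x y t
  + (al + be * x) * u x y t * (ux x y t + u x y t * u x y t * ux x y t + uxxx x y t)
  - (al + be * x) * uy x y t * uxy x y t.

Definition flux_y (al be x y t : R) : R := (al + be * x) * (u x y t * uxy x y t).

Definition flux_y_dy (al be x y t : R) : R :=
  (al + be * x) * (uy x y t * uxy x y t + u x y t * uxyy x y t).

Lemma flux_x_deriv (al be x y t : R) :
  is_derive (fun s => flux_x al be s y t) x (flux_x_dx al be x y t).
Proof.
  assert (H1 : forall s, is_derive (fun z => u z y t) s (ux s y t)) by (intros; apply is_derive_Reals, Hdx1).
  assert (H2 : forall s, is_derive (fun z => ux z y t) s (uxx s y t)) by (intros; apply is_derive_Reals, Hdx2).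
  assert (H3 : forall s, is_derive (fun z => uxx z y t) s (uxxx s y t)) by (intros; apply is_derive_Reals, Hdx3).
  assert (H4 : forall s, is_derive (fun z => uy z y t) s (uxy s y t)) by (intros; apply is_derive_Reals, Hdxy).
  unfold flux_x. eapply is_derive_eq.
  - derive_tac ltac:(idtac; lazymatch goal with
      | |- is_derive (fun s => u s _ _) _ _ => apply H1
      | |- is_derive (fun s => ux s _ _) _ _ => apply H2
      | |- is_derive (fun s => uxx s _ _) _ _ => apply H3
      | |- is_derive (fun s => uy s _ _) _ _ => apply H4 end).
  - unfold flux_x_dx, dissipation_density. field.
Qed.

Lemma flux_y_deriv (al be x y t : R) :
  is_derive (fun s => flux_y al be x s t) y (flux_y_dy al be x y t).
Proof.
  assert (H1 : forall s, is_derive (fun z => u x z t) s (uy x s t)) by (intros; apply is_derive_Reals, Hdy1).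
  assert (H2 : forall s, is_derive (fun z => uxy x z t) s (uxyy x s t)) by (intros; apply is_derive_Reals, Hdyxy).
  unfold flux_y. eapply is_derive_eq.
  - derive_tac ltac:(idtac; lazymatch goal with
      | |- is_derive (fun s => u _ s _) _ _ => apply H1
      | |- is_derive (fun s => uxy _ s _) _ _ => apply H2 end).
  - unfold flux_y_dy. ring.
Qed.

Lemma flux_x_dx_cont (al be : R) : cont3 (flux_x_dx al be).
Proof. unfold flux_x_dx, dissipation_density. cont_tac. Qed.

Lemma flux_y_dy_cont (al be : R) : cont3 (flux_y_dy al be).
Proof. unfold flux_y_dy. cont_tac. Qed.

Lemma dissipation_density_cont : cont3 dissipation_density.
Proof. unfold dissipation_density. cont_tac. Qed.

(* The y-flux vanishes at y = -B and y = B, so its divergence integrates to 0. *)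
Lemma int_flux_y_dy (al be t : R) : 0 <= t -> dint L B (fun x y => flux_y_dy al be x y t) = 0.
Proof.
  intros Ht. rewrite <- (dint_zero L B). unfold dint. apply RInt_ext. intros x Hx.
  rewrite Rmin_left, Rmax_right in Hx by lra. rewrite RInt_zero.
  apply is_RInt_unique. replace 0 with (minus (flux_y al be x B t) (flux_y al be x (- B) t)).
  - apply (is_RInt_derive (V := R_CompleteNormedModule) (fun s => flux_y al be x s t)).
    + intros; apply flux_y_deriv.
    + intros. apply (cont2_continuous_2 (fun x y => flux_y_dy al be x y t)), cont3_freeze.
      apply flux_y_dy_cont.
  - unfold flux_y. destruct (Hbc1 x t ltac:(lra) Ht) as [-> ->].
    unfold minus, plus, opp; simpl. ring.
Qed.

(* The x-flux vanishes at x = L (u = u_x = 0 there, hence u_y = 0) and equals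
   -al u_x^2 / 2 at x = 0, so its divergence has nonnegative integral. *)
Lemma int_flux_x_dx_nonneg (al be t : R) : 0 <= al -> 0 <= t ->
  0 <= dint L B (fun x y => flux_x_dx al be x y t).
Proof.
  intros Hal Ht. unfold dint.
  rewrite (fubini (fun x y => flux_x_dx al be x y t)) by (auto; apply cont3_freeze, flux_x_dx_cont).
  apply Rle_trans with (RInt (fun _ => 0) (- B) B); [rewrite RInt_zero; lra |].
  apply RInt_le; [lra | apply ex_RInt_cont; intros; apply continuous_const | |].
  { apply ex_RInt_cont. intros.
    apply (cont2_inner_cont_1 (fun x y => flux_x_dx al be x y t)), cont3_freeze, flux_x_dx_cont. }
  intros y Hy.
  rewrite (is_RInt_unique _ 0 L (minus (flux_x al be L y t) (flux_x al be 0 y t))).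
  2:{ apply (is_RInt_derive (V := R_CompleteNormedModule) (fun s => flux_x al be s y t)).
      + intros; apply flux_x_deriv.
      + intros. apply (cont2_continuous_1 (fun x y => flux_x_dx al be x y t)), cont3_freeze.
        apply flux_x_dx_cont. }
  destruct (Hbc2 y t ltac:(lra) Ht) as [h0 [hL hxL]].
  assert (hy : forall x, x = 0 \/ x = L -> uy x y t = 0).
  { intros x Hx. apply (deriv_zero_inside (fun z => u x z t) (- B) B y); [| lra |].
    - intros z Hz. destruct Hx as [-> | ->]; apply Hbc2; auto.
    - apply is_derive_Reals, Hdy1. }
  unfold flux_x, minus, plus, opp; simpl.
  rewrite h0, hL, hxL, (hy 0), (hy L) by auto.
  pose proof (Rle_0_sqr (ux 0 y t)). unfold Rsqr in H. nra.
Qed.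

Lemma energy_inequality (al be t : R) : 0 <= al -> 0 < t ->
  dint L B (fun x y => energy_density_t al be x y t)
  <= be * dint L B (fun x y => dissipation_density x y t).
Proof.
  intros Hal Ht.
  rewrite (dint_ext L B HL HB _ (fun x y => be * dissipation_density x y t +
     (-2) * (1 * flux_x_dx al be x y t + 1 * flux_y_dy al be x y t))).
  2:{ intros x y Hx Hy. pose proof (Heq x y t Hx Hy Ht) as E.
      unfold energy_density_t, flux_x_dx, flux_y_dy, dissipation_density.
      replace (ut x y t) with (- (ux x y t + (u x y t) ^ 2 * ux x y t + uxxx x y t + uxyy x y t))
        by lra.
      field. }
  pose proof (cont3_freeze _ t (flux_x_dx_cont al be)) as Cx.
  pose proof (cont3_freeze _ t (flux_y_dy_cont al be)) as Cy.
  rewrite dint_lin; [| apply cont3_freeze, dissipation_density_cont | cont_tac].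
  rewrite dint_lin by assumption.
  rewrite int_flux_y_dy by lra. pose proof (int_flux_x_dx_nonneg al be t Hal ltac:(lra)). lra.
Qed.

Lemma energy_deriv (al be t : R) :
  is_derive (energy al be) t (dint L B (fun x y => energy_density_t al be x y t)).
Proof.
  apply (dint_deriv_t L B (energy_density al be) (energy_density_t al be)).
  - unfold energy_density. cont_tac.
  - unfold energy_density_t. cont_tac.
  - intros x y s. apply is_derive_Reals.
    assert (H1 : forall s, is_derive (fun z => u x y z) s (ut x y s)) by (intros; apply is_derive_Reals, Hdt).
    unfold energy_density. eapply is_derive_eq.
    + derive_tac ltac:(idtac; lazymatch goal with
        | |- is_derive (fun s => u _ _ s) _ _ => apply H1
        | |- is_derive (u _ _) _ _ => apply H1 end).
    + unfold energy_density_t. ring.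
Qed.

(* For be = 0 the energy inequality says the L2 norm is nonincreasing. *)
Lemma l2_energy_nonincreasing (t : R) : 0 <= t -> energy 1 0 t <= energy 1 0 0.
Proof.
  apply (nonincreasing _ _ (energy_deriv 1 0)).
  intros s Hs. pose proof (energy_inequality 1 0 s ltac:(lra) Hs). lra.
Qed.

Lemma energy_unweighted (t : R) : energy 1 0 t = dint L B (fun x y => u x y t * u x y t).
Proof. apply dint_ext; auto. intros. unfold energy_density. ring. Qed.

(* On Omega the weight 1 + x lies between 1 and 1 + L. *)
Lemma energy_weight_bounds (t : R) : energy 1 0 t <= energy 1 1 t <= (1 + L) * energy 1 0 t.
Proof.
  split; [| unfold energy; rewrite <- dint_scal by (unfold energy_density; cont_tac)];
    apply dint_le; auto; try (unfold energy_density; cont_tac);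
    intros x y Hx Hy; unfold energy_density;
    pose proof (Rle_0_sqr (u x y t)); unfold Rsqr in *; nra.
Qed.

(* Exponential decay of the weighted energy: under the smallness assumption on
   the initial L2 norm (which persists in time), the energy inequality with
   weight 1 + x and the dissipation estimate give W' <= -A2 N <= -A2/(1+L) W. *)
Lemma weighted_energy_decay (A2 : R) :
  2 * A2 = PI ^ 2 * (3 / L ^ 2 + 1 / (4 * B ^ 2)) - 1 ->
  energy 1 0 0 <= A2 / (2 * PI ^ 2 * (1 / L ^ 2 + 1 / (4 * B ^ 2))) ->
  forall t, 0 <= t -> energy 1 1 t <= exp (- (A2 / (1 + L)) * t) * energy 1 1 0.
Proof.
  intros HA Hsmall. apply (gronwall _ _ _ (energy_deriv 1 1)). intros s Hs.
  assert (HN0 : 0 <= energy 1 0 s).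
  { apply dint_ge0; auto; [unfold energy_density; cont_tac |].
    intros. unfold energy_density. pose proof (Rle_0_sqr (u x y s)). unfold Rsqr in *. nra. }
  assert (Hdiss : dint L B (fun x y => dissipation_density x y s) <= - A2 * energy 1 0 s).
  { rewrite energy_unweighted.
    apply (dissipation_bound L B (fun x y => u x y s) (fun x y => ux x y s) (fun x y => uy x y s));
      auto; try (apply cont3_freeze; auto).
    - intros; apply is_derive_Reals, Hdx1.
    - intros; apply is_derive_Reals, Hdy1.
    - intros y Hy. destruct (Hbc2 y s Hy ltac:(lra)) as [h0 [hL _]]. auto.
    - intros x Hx. apply Hbc1; auto; lra.
    - rewrite <- energy_unweighted.
      apply Rle_trans with (energy 1 0 0); auto. apply l2_energy_nonincreasing; lra. }
  assert (HA2 : 0 <= A2).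
  { set (D := 2 * PI ^ 2 * (1 / L ^ 2 + 1 / (4 * B ^ 2))) in Hsmall.
    assert (HD : 0 < D).
    { pose proof PI_RGT_0. pose proof (pow_lt L 2 HL). pose proof (pow_lt B 2 HB).
      apply Rmult_lt_0_compat; [nra |].
      apply Rplus_lt_0_compat; apply Rdiv_lt_0_compat; lra. }
    pose proof (l2_energy_nonincreasing s ltac:(lra)).
    replace A2 with (A2 / D * D) by (field; lra). apply Rmult_le_pos; lra. }
  pose proof (energy_inequality 1 1 s ltac:(lra) Hs).
  pose proof (energy_weight_bounds s) as [_ HW].
  replace (- (A2 / (1 + L)) * energy 1 1 s) with (- A2 * (energy 1 1 s / (1 + L))) by (field; lra).
  assert (energy 1 1 s / (1 + L) <= energy 1 0 s).
  { apply Rmult_le_reg_r with (1 + L); [lra |]. unfold Rdiv. rewrite Rmult_assoc, Rinv_l; lra. }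
  assert (A2 * (energy 1 1 s / (1 + L)) <= A2 * energy 1 0 s) by (apply Rmult_le_compat_l; lra).
  lra.
Qed.

End Solution.

(* The theorem: the quantities of the statement are energies of the solution
   (continuous integrands, initial data matched on the closed rectangle). *)
Theorem theorem5p1
  (L B A : R) (u0 : R -> R -> R)
  (u ut ux uxx uxxx uy uyy uxy uxyy : R -> R -> R -> R) :
  0 < L -> 0 < B ->
  2 * A ^ 2 = PI ^ 2 * (3 / L ^ 2 + 1 / (4 * B ^ 2)) - 1 ->
  0 < 2 * A ^ 2 ->
  norm2 L B u0 < A ^ 2 / (2 * PI ^ 2 * (1 / L ^ 2 + 1 / (4 * B ^ 2))) ->
  dt_is u ut -> dx_is u ux -> dx_is ux uxx -> dx_is uxx uxxx ->
  dy_is u uy -> dy_is uy uyy -> dx_is uy uxy -> dy_is ux uxy ->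
  dx_is uyy uxyy -> dy_is uxy uxyy ->
  cont3 u -> cont3 ut -> cont3 ux -> cont3 uxx -> cont3 uxxx ->
  cont3 uy -> cont3 uyy -> cont3 uxy -> cont3 uxyy ->
  (exists M, forall t, 0 <= t ->
     norm2 L B (fun x y => u x y t) + norm2 L B (fun x y => ux x y t)
     + norm2 L B (fun x y => uy x y t) <= M) ->
  (forall x y t, 0 < x < L -> - B < y < B -> 0 < t ->
     ut x y t + ux x y t + (u x y t) ^ 2 * ux x y t + uxxx x y t
     + uxyy x y t = 0) ->
  (forall x t, 0 <= x <= L -> 0 <= t -> u x B t = 0 /\ u x (- B) t = 0) ->
  (forall y t, - B <= y <= B -> 0 <= t ->
     u 0 y t = 0 /\ u L y t = 0 /\ ux L y t = 0) ->
  (forall x y, 0 <= x <= L -> - B <= y <= B -> u x y 0 = u0 x y) ->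
  forall t, 0 <= t ->
    norm2 L B (fun x y => u x y t) <= wnorm2 L B (fun x y => u x y t) /\
    wnorm2 L B (fun x y => u x y t)
      <= exp (- (A ^ 2 / (1 + L)) * t) * wnorm2 L B u0.
Proof.
  intros HL HB HA _ Hu0 Hdt Hdx1 Hdx2 Hdx3 Hdy1 _ Hdxy _ _ Hdyxy
    Cu Cut Cux _ Cuxxx Cuy _ Cuxy Cuxyy _ Heq Hbc1 Hbc2 Hinit t Ht.
  assert (Hdens : forall al be s, cont2 (fun x y => energy_density u al be x y s))
    by (intros; unfold energy_density; cont_tac).
  assert (Hnorm : forall s, norm2 L B (fun x y => u x y s) = energy L B u 1 0 s).
  { intros s. apply IntOmega_dint; auto. intros. unfold energy_density. ring. }
  assert (Hwnorm : forall s, wnorm2 L B (fun x y => u x y s) = energy L B u 1 1 s).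
  { intros s. apply IntOmega_dint; auto. intros. unfold energy_density. ring. }
  assert (Hinit_energy : norm2 L B u0 = energy L B u 1 0 0 /\ wnorm2 L B u0 = energy L B u 1 1 0).
  { split; apply IntOmega_dint; auto; intros x y Hx Hy;
      unfold energy_density; rewrite (Hinit x y Hx Hy); ring. }
  destruct Hinit_energy as [Hn0 Hw0].
  rewrite Hnorm, !Hwnorm, Hw0. split.
  - exact (proj1 (energy_weight_bounds L B u HL HB Cu t)).
  - apply (weighted_energy_decay L B u ut ux uxx uxxx uy uxy uxyy); auto; lra.
Qed.
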